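(* Let $S$ be a group, $N\triangleleft S$ a proper normal subgroup, $B$ any left $S$-act and $I$ a set with $|I|\ge1$. Then $B\amalg\overline{N}^{(\ast)I}$ is geometrically equivalent to $B\amalg\overline{N}$, and $\overline{N}^{(\ast)I}$ is geometrically equivalent to $\overline{N}$.
   Context: A left $S$-act is a nonempty set with an action $S\times A\to A$ satisfying $1a=a$, $(st)a=s(ta)$; homomorphisms preserve the action; $\amalg$ denotes coproduct (disjoint union), and $A^{(\ast)I}=\coprod_{i\in I}A_i$ with each $A_i=A$. For a subgroup $K$ of $S$, $\overline{K}=S/K$ is the $S$-act of left cosets with $s\cdot tK=stK$. For a nonempty finite set $X$, $F_X=\coprod_{x\in X}S_x$ is the free $S$-act on $X$. For an $S$-act $G$ and a relation $T\subseteq F_X\times F_X$, $T'_G=\{\mu:F_X\to G \text{ homomorphism}: T\subseteq\ker\mu\}$ and $T''_G=\bigcap_{\mu\in T'_G}\ker\mu$ (empty intersection $=F_X\times F_X$). $S$-acts $G_1,G_2$ are geometrically equivalent iff $T''_{G_1}=T''_{G_2}$ for all nonempty finite $X$ and all $T\subseteq F_X\times F_X$. *)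

From Stdlib Require Import FunctionalExtensionality PropExtensionality ProofIrrelevance.
From mathcomp Require Import all_boot.

Set Implicit Arguments.
Unset Strict Implicit.

Record Grp := {
  gcar :> Type;
  gmul : gcar -> gcar -> gcar;
  gone : gcar;
  ginv : gcar -> gcar;
  gmulA : forall x y z, gmul x (gmul y z) = gmul (gmul x y) z;
  gmul1x : forall x, gmul gone x = x;
  gmulx1 : forall x, gmul x gone = x;
  gmulVx : forall x, gmul (ginv x) x = gone;
  gmulxV : forall x, gmul x (ginv x) = gone }.

Arguments gmul {g}. Arguments gone {g}. Arguments ginv {g}.

Definition normal_subgroup (S : Grp) (N : S -> Prop) : Prop :=
  N gone /\
  (forall x y, N x -> N y -> N (gmul x y)) /\
  (forall x, N x -> N (ginv x)) /\
  (forall g x, N x -> N (gmul (gmul g x) (ginv g))).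

Record Act (S : Grp) := {
  acar :> Type;
  act : S -> acar -> acar;
  act1 : forall a, act gone a = a;
  actM : forall s t a, act (gmul s t) a = act s (act t a);
  act_nonempty : inhabited acar }.

Arguments act {S} {a0} : rename.

Definition is_hom (S : Grp) (A B : Act S) (f : A -> B) : Prop :=
  forall s a, f (act s a) = act s (f a).

Definition sum_act (S : Grp) (A B : Act S) (s : S) (x : A + B) : A + B :=
  match x with inl a => inl (act s a) | inr b => inr (act s b) end.

Definition coprod (S : Grp) (A B : Act S) : Act S.
Proof.
refine {| acar := (A + B)%type; act := @sum_act S A B |}.
- by move=> [a|b] /=; rewrite act1.
- by move=> s t [a|b] /=; rewrite actM.
- by case: (act_nonempty A) => a; constructor; exact: inl a.
Defined.

(** A^(star I) = coproduct of |I| copies of A, carrier I * A. *)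
Definition copower (S : Grp) (I : Type) (hI : inhabited I) (A : Act S) : Act S.
Proof.
refine {| acar := (I * A)%type; act := fun s p => (p.1, act s p.2) |}.
- by move=> [i a] /=; rewrite act1.
- by move=> s t [i a] /=; rewrite actM.
- by case: hI => i; case: (act_nonempty A) => a; constructor; exact: (i, a).
Defined.

(** Free act F_X = coprod_{x in X} S_x; (x, s) stands for s.x. *)
Definition free_act (S : Grp) (X : finType) (hX : inhabited X) : Act S.
Proof.
refine {| acar := (X * S)%type; act := fun t p => (p.1, gmul t p.2) |}.
- by move=> [x s] /=; rewrite gmul1x.
- by move=> s t [x u] /=; rewrite gmulA.
- by case: hX => x; constructor; exact: (x, gone).
Defined.

Lemma ginvM (S : Grp) (s t : S) : ginv (gmul s t) = gmul (ginv t) (ginv s).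
Proof.
transitivity (gmul (ginv (gmul s t)) (gmul (gmul s t) (gmul (ginv t) (ginv s)))).
- by rewrite -!gmulA (gmulA t) gmulxV gmul1x gmulxV gmulx1.
- by rewrite gmulA gmulVx gmul1x.
Qed.

Lemma ginv1 (S : Grp) : ginv (@gone S) = gone.
Proof. by rewrite -[ginv gone]gmulx1 gmulVx. Qed.

(** The act of left cosets S/K: a coset is the subset tK of S. *)
Definition is_coset (S : Grp) (K : S -> Prop) (C : S -> Prop) : Prop :=
  exists t, forall x, C x <-> K (gmul (ginv t) x).

Definition coset_type (S : Grp) (K : S -> Prop) := {C : S -> Prop | is_coset K C}.

Definition coset_act_fun (S : Grp) (K : S -> Prop) (s : S) (C : coset_type K) :
  coset_type K.
Proof.
exists (fun x => proj1_sig C (gmul (ginv s) x)).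
case: C => C [t Ht] /=; exists (gmul s t) => x.
by rewrite Ht ginvM gmulA.
Defined.

Lemma sig_eq_pi (A : Type) (P : A -> Prop) (a b : A) (pa : P a) (pb : P b) :
  a = b -> exist P a pa = exist P b pb.
Proof. by move=> E; subst; f_equal; apply: proof_irrelevance. Qed.

Definition coset_act (S : Grp) (K : S -> Prop) : Act S.
Proof.
refine {| acar := coset_type K; act := @coset_act_fun S K |}.
- move=> [C p]; apply: sig_eq_pi; apply: functional_extensionality => x.
  by rewrite ginv1 gmul1x.
- move=> s t [C p]; apply: sig_eq_pi; apply: functional_extensionality => x /=.
  by rewrite ginvM gmulA.
- constructor; exists (fun x => K (gmul (ginv gone) x)); by exists gone.
Defined.

Definition closure_rel (S : Grp) (G : Act S) (X : finType) (hX : inhabited X)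
  (T : free_act S hX -> free_act S hX -> Prop) (u v : free_act S hX) : Prop :=
  forall mu : free_act S hX -> G, is_hom mu ->
    (forall a b, T a b -> mu a = mu b) -> mu u = mu v.

Definition geom_equiv (S : Grp) (G1 G2 : Act S) : Prop :=
  forall (X : finType) (hX : inhabited X) (T : free_act S hX -> free_act S hX -> Prop)
    (u v : free_act S hX), closure_rel G1 T u v <-> closure_rel G2 T u v.

(** If every pair of distinct points of [G1] is separated by a homomorphism
    into [G2], then every homomorphism [F_X -> G1] that fails to identify
    [u, v] yields one into [G2]; so [T''_G2 <= T''_G1], and mutual separation
    gives geometric equivalence. [N] embeds into [N^(I)] as one summand, and
    [N^(I)] is separated by [N]: points in different summands with the same
    coset are told apart by acting on all summands but one with right
    multiplication [tN |-> tgN] for some [g] outside [N], a fixed-point free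
    endomorphism of [S/N] (here normality is used). Adding the summand [B] on
    both sides preserves separation. *)
From mathcomp Require Import all_boot.
From Stdlib Require Import Classical ClassicalDescription FunctionalExtensionality.
Set Implicit Arguments.
Unset Strict Implicit.

Section Separation.
Variable S : Grp.

Definition separates (A C : Act S) : Prop :=
  forall p q : A, p <> q -> exists h : A -> C, is_hom h /\ h p <> h q.

Lemma closure_rel_separates (A C : Act S) (X : finType) (hX : inhabited X)
    (T : free_act S hX -> free_act S hX -> Prop) (u v : free_act S hX) :
  separates A C -> closure_rel C T u v -> closure_rel A T u v.
Proof.
move=> sepAC clC mu hom_mu T_mu; apply: NNPP => mu_uv.
case: (sepAC _ _ mu_uv) => h [hom_h]; apply.
apply: (clC (fun z => h (mu z))).
- by move=> s a; rewrite hom_mu hom_h.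
- by move=> a b /T_mu ->.
Qed.

Lemma geom_equiv_separates (G1 G2 : Act S) :
  separates G1 G2 -> separates G2 G1 -> geom_equiv G1 G2.
Proof. by move=> sep12 sep21 X hX T u v; split; apply: closure_rel_separates. Qed.

Lemma separates_inj (A C : Act S) (f : A -> C) :
  is_hom f -> injective f -> separates A C.
Proof. by move=> hom_f inj_f p q pq; exists f; split => // /inj_f. Qed.

Definition coprod_mapr (B A C : Act S) (h : A -> C) (x : coprod B A) : coprod B C :=
  match x with inl b => inl b | inr a => inr (h a) end.

Lemma coprod_mapr_hom (B A C : Act S) (h : A -> C) :
  is_hom h -> is_hom (coprod_mapr (B := B) h).
Proof. by move=> hom_h s [b|a] //=; rewrite hom_h. Qed.

(* The homomorphism [f] is needed to separate points of the summand [B]. *)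
Lemma separates_coprodr (B A C : Act S) (f : A -> C) :
  is_hom f -> separates A C -> separates (coprod B A) (coprod B C).
Proof.
move=> hom_f sepAC x y xy.
have [h [hom_h hxy]] : exists h : A -> C,
    is_hom h /\ coprod_mapr (B := B) h x <> coprod_mapr (B := B) h y.
  case: x y xy => [b|a] [b'|a'] xy; try by exists f; split => //= [[E]]; apply: xy; rewrite E.
  have [h [hom_h haa']] : exists h : A -> C, is_hom h /\ h a <> h a'.
    by apply: sepAC => E; apply: xy; rewrite E.
  by exists h; split => // -[].
by exists (coprod_mapr (B := B) h); split => //; apply: coprod_mapr_hom.
Qed.

Lemma separates_copower_in (I : Type) (hI : inhabited I) (A : Act S) (i : I) :
  separates A (copower hI A).
Proof. by apply: (@separates_inj _ _ (fun a : A => ((i, a) : copower hI A))) => // a b []. Qed.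

Lemma separates_copower (I : Type) (hI : inhabited I) (A : Act S) (r : A -> A) :
  is_hom r -> (forall a, r a <> a) -> separates (copower hI A) A.
Proof.
move=> hom_r r_fixfree [i a] [j b] ij_ab.
case: (classic (a = b)) => [ab|ab]; last by exists snd.
have ij : i <> j by move=> ij; apply: ij_ab; rewrite ij ab.
pose h (p : copower hI A) : A :=
  if excluded_middle_informative (p.1 = i) then p.2 else r p.2.
exists h; split.
- move=> s [k c]; rewrite /h /=.
  by case: (excluded_middle_informative (k = i)) => [ki|nki] /=; last apply: hom_r.
- rewrite /h /= ab; case: (excluded_middle_informative (i = i)) => [ii|//] /=.
  case: (excluded_middle_informative (j = i)) => [ji|nji] /=; first by case: ij.
  by move/esym; apply: r_fixfree.
Qed.

End Separation.

Section RightMultiplication.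
Variables (S : Grp) (N : S -> Prop).
Hypothesis normalN : normal_subgroup N.

Lemma ginvK (g : S) : ginv (ginv g) = g.
Proof.
transitivity (gmul (gmul g (ginv g)) (ginv (ginv g))).
- by rewrite gmulxV gmul1x.
- by rewrite -gmulA gmulxV gmulx1.
Qed.

Lemma normal_conjV (g y : S) : N y -> N (gmul (gmul (ginv g) y) g).
Proof.
case: normalN => _ [_ [_ conjN]] Ny.
by move: (conjN (ginv g) y Ny); rewrite ginvK.
Qed.

Lemma normal_conjVE (g y : S) : N (gmul (gmul (ginv g) y) g) -> N y.
Proof.
case: normalN => _ [_ [_ conjN]] /(conjN g).
by rewrite -!gmulA gmulxV gmulx1 !gmulA gmulxV gmul1x.
Qed.

(* For [C = tN], the set [Cg = {x | x g^-1 \in C}] is the coset [tgN]. *)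
Lemma coset_rmul_is_coset (g : S) (C : coset_type N) :
  is_coset N (fun x => proj1_sig C (gmul x (ginv g))).
Proof.
case: C => P [t Ht] /=; exists (gmul t g) => x.
have E : gmul (gmul (ginv g) (gmul (ginv t) (gmul x (ginv g)))) g
         = gmul (ginv (gmul t g)) x.
  by rewrite ginvM -!gmulA gmulVx gmulx1.
by rewrite Ht -E; split; [apply: normal_conjV | apply: normal_conjVE].
Qed.

Definition coset_rmul (g : S) (C : coset_type N) : coset_type N :=
  exist _ _ (coset_rmul_is_coset g C).

Lemma coset_rmul_hom (g : S) : is_hom (A := coset_act N) (B := coset_act N) (coset_rmul g).
Proof.
move=> s [P p]; apply: sig_eq_pi; apply: functional_extensionality => x /=.
by rewrite gmulA.
Qed.

Lemma coset_rmul_fixfree (g : S) (C : coset_type N) : ~ N g -> coset_rmul g C <> C.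
Proof.
move=> Ng E; move: (f_equal (@proj1_sig _ _) E) => /= {}E.
case: C E => P [t Ht] /= E.
have Pt : P t by apply/Ht; rewrite gmulVx; case: normalN.
have : P (gmul t g).
  by move: (f_equal (fun f => f (gmul t g)) E); rewrite /= -gmulA gmulxV gmulx1 => <-.
by move/Ht; rewrite gmulA gmulVx gmul1x.
Qed.

End RightMultiplication.

Theorem proposition3p16 (S : Grp) (N : S -> Prop)
  (HN : normal_subgroup N) (Hproper : exists s : S, ~ N s)
  (B : Act S) (I : Type) (hI : inhabited I) :
  geom_equiv (coprod B (copower hI (coset_act N))) (coprod B (coset_act N)) /\
  geom_equiv (copower hI (coset_act N)) (coset_act N).
Proof.
have [i0] := hI; have [g Ng] := Hproper.
have sep_in : separates (coset_act N) (copower hI (coset_act N)).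
  exact: separates_copower_in i0.
have sep_out : separates (copower hI (coset_act N)) (coset_act N).
  apply: (@separates_copower _ _ _ (coset_act N) (coset_rmul HN g)).
  - exact: coset_rmul_hom.
  - by move=> C; apply: coset_rmul_fixfree.
split; apply: geom_equiv_separates => //.
- by apply: (@separates_coprodr _ B (copower hI (coset_act N)) (coset_act N) snd).
- by apply: (@separates_coprodr _ B (coset_act N) (copower hI (coset_act N)) (pair i0)).
Qed.
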